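(* Let $C\subset X$ be a strictly convex cone and $T:X\to Y$ a linear mapping between finite-dimensional Euclidean spaces such that $\{0\}\neq\operatorname{Ker}T\cap C\subset\operatorname{bd}C$. Then $T(C)$ is a pointed cone in $Y$.
   Context: A cone $D$ is pointed if $D\cap(-D)=\{0\}$. A cone is regular if pointed, closed, convex, with nonempty interior; a regular cone is strictly convex if every face other than the cone itself and $\{0\}$ has dimension one (a face being a convex $\mathcal F\subset C$ such that $x,y\in C$, $\lambda x+(1-\lambda)y\in\mathcal F$ for some $0<\lambda<1$ implies $x,y\in\mathcal F$). *)

(* Euclidean space R^n is 'rV[R]_n,
   with its canonical (product = Euclidean) topology. *)
From HB Require Import structures.
From mathcomp Require Import all_boot all_order all_algebra.
From mathcomp Require Import all_classical all_reals all_analysis.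
Set Implicit Arguments. Unset Strict Implicit. Unset Printing Implicit Defensive.
Import Order.TTheory GRing.Theory Num.Theory.
Import numFieldNormedType.Exports.
Local Open Scope classical_set_scope.
Local Open Scope ring_scope.

Section Cones.
Variables (R : realType) (n : nat).
Implicit Types (D F : set 'rV[R]_n).

Definition is_cone D := forall x, D x -> forall l : R, 0 <= l -> D (l *: x).

Definition pointed D := D `&` [set - x | x in D] = [set 0].

Definition convex_set D :=
  forall x y, D x -> D y -> forall l : R, 0 <= l <= 1 -> D (l *: x + (1 - l) *: y).

Definition regular_cone D :=
  [/\ is_cone D, pointed D, closed D, convex_set D & interior D !=set0].

Definition bd D := closure D `\` interior D.

Definition is_face D F :=
  F `<=` D /\ convex_set F /\
  forall x y l, D x -> D y -> 0 < l < 1 -> F (l *: x + (1 - l) *: y) -> F x /\ F y.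

Definition span_dim D (k : nat) :=
  (exists M : 'M[R]_(k, n), (forall i, D (row i M)) /\ \rank M = k) /\
  (forall m (M : 'M[R]_(m, n)), (forall i, D (row i M)) -> (\rank M <= k)%N).

(* dimension of a (nonempty) convex set = dimension of its affine hull
   = dimension of the span of its differences *)
Definition aff_dim F (k : nat) := span_dim [set x - y | x in F & y in F] k.

Definition strictly_convex_cone D :=
  regular_cone D /\
  forall F, is_face D F -> F !=set0 -> F <> D -> F <> [set 0] -> aff_dim F 1.

End Cones.

From Pilot Require Import Defs.
From HB Require Import structures.
From mathcomp Require Import all_boot all_order all_algebra.
From mathcomp Require Import all_classical all_reals all_analysis.
Set Implicit Arguments.
Unset Strict Implicit.
Unset Printing Implicit Defensive.

Import Order.TTheory GRing.Theory Num.Theory.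
Import numFieldNormedType.Exports.
Local Open Scope classical_set_scope.
Local Open Scope ring_scope.

(* If T x = - T z with x, z in C, then w := x + z lies in Ker T and C, hence
   on the boundary of C.  The face of C generated by w contains 0, x and z but
   no interior point, so it is a proper nonzero face (unless x = 0); by strict
   convexity it is a ray, so z = a x.  Then (1 + a) T x = 0, and a = -1 would
   put x in C and -C, forcing x = 0. *)

Lemma row_col_mx_rV {F : fieldType} {n} (x z : 'rV[F]_n) (i : 'I_(1 + 1)) :
  row i (col_mx x z) = x \/ row i (col_mx x z) = z.
Proof.
case: (split_ordP i) => j ->; [left | right]; apply/rowP => k;
  by rewrite mxE (col_mxEu, col_mxEd) ord1.
Qed.

Lemma rank_col_mx_le1 (F : fieldType) n (x z : 'rV[F]_n) :
  (\rank (col_mx x z) <= 1)%N -> x != 0 -> exists a, z = a *: x.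
Proof.
move=> rk_le1 x_neq0; apply/sub_rVP; apply: submx_trans (addsmxSr x z) _.
rewrite -(mxrank_leqif_sup (addsmxSl x z)).2.
by rewrite eqn_leq mxrankS ?addsmxSl //= rank_rV x_neq0 addsmxE.
Qed.

Lemma aff_dim1_collinear (R : realType) n (F : set 'rV[R]_n) (x z : 'rV[R]_n) :
  aff_dim F 1 -> F 0 -> F x -> F z -> x != 0 -> exists a, z = a *: x.
Proof.
move=> [_ dim_le1] F0 Fx Fz; apply: rank_col_mx_le1; apply: dim_le1 => i.
by case: (row_col_mx_rV x z i) => ->; [exists x | exists z] => //; exists 0; rewrite ?subr0.
Qed.

Section ConvexCone.
Variables (R : realType) (n : nat) (C : set 'rV[R]_n).
Hypotheses (Ccone : is_cone C) (Cconv : Defs.convex_set C).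

Lemma cone_addr_closed a b : C a -> C b -> C (a + b).
Proof.
move=> Ca Cb; have half01 : 0 <= (2^-1 : R) <= 1.
  by rewrite invr_ge0 ler0n invf_le1 ?ler1n ?ltr0n.
have := Ccone (Cconv Ca Cb half01) (ler0n R 2).
have -> : 1 - 2^-1 = 2^-1 :> R by rewrite {1}(splitr 1) mul1r addrK.
by rewrite -scalerDr scalerA mulfV ?pnatr_eq0 // scale1r.
Qed.

Lemma cone0 : C !=set0 -> C 0.
Proof. by move=> [x Cx]; rewrite -(scale0r x); exact: Ccone. Qed.

(* The face of [C] generated by [w]: the directions [u] of [C] along which
   [w] can be moved backwards without leaving [C]. *)
Definition minimal_face w :=
  [set u | C u /\ exists2 t : R, 0 < t & C (w - t *: u)].

Lemma minimal_face_shrink w u s t :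
  C w -> 0 < s <= t -> C (w - t *: u) -> C (w - s *: u).
Proof.
move=> Cw /andP[s_gt0 s_le_t] Cwt; have t_gt0 : 0 < t := lt_le_trans s_gt0 s_le_t.
have st01 : 0 <= s / t <= 1.
  by rewrite divr_ge0 ?(ltW s_gt0) ?(ltW t_gt0) //= ler_pdivrMr // mul1r.
have := Cconv Cwt Cw st01.
by rewrite scalerBr scalerA divfK ?gt_eqF // scalerBl scale1r addrC addrA subrK.
Qed.

Lemma minimal_face_convex w : C w -> Defs.convex_set (minimal_face w).
Proof.
move=> Cw a b [Ca [ta ta_gt0 Cwa]] [Cb [tb tb_gt0 Cwb]] l l01.
split; first exact: Cconv.
pose t := Num.min ta tb.
have t_gt0 : 0 < t by rewrite lt_min ta_gt0.
have {}Cwa : C (w - t *: a).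
  by apply: minimal_face_shrink Cwa; rewrite // t_gt0 ge_min lexx.
have {}Cwb : C (w - t *: b).
  by apply: minimal_face_shrink Cwb; rewrite // t_gt0 ge_min lexx orbT.
exists t => //; have := Cconv Cwa Cwb l01.
rewrite !scalerBr !scalerA scalerDr !scalerA opprD addrACA -scalerDl subrKC scale1r.
by rewrite [l * t]mulrC [(1 - l) * t]mulrC.
Qed.

Lemma minimal_face_extremel w a b l : C a -> C b -> 0 < l < 1 ->
  minimal_face w (l *: a + (1 - l) *: b) -> minimal_face w a.
Proof.
move=> Ca Cb /andP[l_gt0 l_lt1] [_ [t t_gt0 Cwt]]; split=> //.
exists (t * l); first exact: mulr_gt0.
have tl'_ge0 : 0 <= t * (1 - l) by rewrite mulr_ge0 ?ltW ?subr_gt0.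
have := cone_addr_closed Cwt (Ccone Cb tl'_ge0).
by rewrite scalerDr !scalerA opprD addrA subrK.
Qed.

Lemma minimal_face_is_face w : C w -> is_face C (minimal_face w).
Proof.
move=> Cw; split; first by move=> u [].
split; first exact: minimal_face_convex.
move=> a b l Ca Cb l01 Fab; split; first exact: minimal_face_extremel Fab.
apply: (minimal_face_extremel Cb Ca (l := 1 - l)).
  by rewrite subr_gt0 ltrBlDr ltrDl; case/andP: l01 => -> ->.
by rewrite subKr addrC.
Qed.

Lemma minimal_face_addl x z : C x -> C z -> minimal_face (x + z) x.
Proof. by move=> Cx Cz; split=> //; exists 1; rewrite // scale1r addrC addKr. Qed.

Lemma minimal_face0 w : C w -> minimal_face w 0.
Proof.
move=> Cw; split; first by apply: cone0; exists w.
by exists 1; rewrite // scaler0 subr0.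
Qed.

Lemma interior_minimal_face w p :
  interior C p -> minimal_face w p -> interior C w.
Proof.
move=> Cp_int [_ [t t_gt0 Cwt]].
pose g v := p + t^-1 *: (v - w).
have g_cvg : g @ w --> p.
  rewrite -[p in _ --> p]addr0 -(scaler0 _ t^-1) -(subrr w).
  apply: (cvgD (F := nbhs w) (f := fun=> p) (cvg_cst p)).
  apply: (cvgZ (F := nbhs w) (s := fun=> t^-1) (cvg_cst t^-1)).
  exact: (cvgB (F := nbhs w) (f := id) (g := fun=> w) cvg_id (cvg_cst w)).
have Cg_near : nbhs w (g @^-1` C) := g_cvg C Cp_int.
rewrite /interior /=; apply: filterS Cg_near => v Cgv.
have := cone_addr_closed Cwt (Ccone Cgv (ltW t_gt0)).
by rewrite scalerDr scalerA mulfV ?gt_eqF // scale1r addrA subrK subrKC.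
Qed.

End ConvexCone.

Lemma strictly_convex_bd_addr_collinear (R : realType) n (C : set 'rV[R]_n) x z :
  strictly_convex_cone C -> C x -> C z -> bd C (x + z) -> x != 0 ->
  exists a, z = a *: x.
Proof.
move=> [[Ccone _ _ Cconv [p Cp_int]] Cface] Cx Cz [_ w_nint] x_neq0.
have Cw : C (x + z) := cone_addr_closed Ccone Cconv Cx Cz.
have Fx := minimal_face_addl Cx Cz.
have Fz : minimal_face C (x + z) z.
  by rewrite addrC; exact: minimal_face_addl.
apply: (aff_dim1_collinear _ (minimal_face0 Ccone Cw) Fx Fz x_neq0).
apply: Cface; first exact: minimal_face_is_face.
- by exists 0; exact: minimal_face0.
- move=> FC; apply: w_nint; apply: (interior_minimal_face Ccone Cconv Cp_int).
  by rewrite FC; exact: interior_subset.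
- by move=> F0; move: Fx x_neq0; rewrite F0 => ->; rewrite eqxx.
Qed.

Lemma is_cone_linear_image (R : realType) n m (C : set 'rV[R]_n)
    (T : {linear 'rV[R]_n -> 'rV[R]_m}) :
  is_cone C -> is_cone (T @` C).
Proof.
by move=> Ccone _ [x Cx <-] l l_ge0; exists (l *: x); [exact: Ccone | rewrite linearZ].
Qed.

Theorem lemma3 (R : realType) (n m : nat) (C : set 'rV[R]_n)
    (T : {linear 'rV[R]_n -> 'rV[R]_m}) :
  strictly_convex_cone C ->
  [set x | T x = 0] `&` C <> [set 0] ->
  [set x | T x = 0] `&` C `<=` bd C ->
  is_cone (T @` C) /\ pointed (T @` C).
Proof.
move=> Csc _ kerC_bd; have [[Ccone Cpt _ Cconv [p /interior_subset Cp]] _] := Csc.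
split; first exact: is_cone_linear_image.
apply/seteqP; split=> [_ [[x Cx <-] [_ [z Cz <-] Tzx]] | _ ->]; last first.
  have TC0 : (T @` C) 0 by exists 0; [apply: cone0; last exists p | rewrite linear0].
  by split=> //; exists 0; rewrite ?oppr0.
have [->|x_neq0] := eqVneq x 0; first by rewrite linear0.
have Kw : T (x + z) = 0 by rewrite linearD -Tzx addNr.
have Cw : C (x + z) := cone_addr_closed Ccone Cconv Cx Cz.
have [a za] := strictly_convex_bd_addr_collinear Csc Cx Cz (kerC_bd _ (conj Kw Cw)) x_neq0.
have : (1 + a) *: T x = 0 by rewrite scalerDl scale1r -linearZ -za -Tzx addNr.
move/eqP; rewrite scaler_eq0 => /orP[|/eqP //]; rewrite addrC addr_eq0 => /eqP a_eqN1.
have : (C `&` [set - u | u in C]) x.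
  by split=> //; exists z; rewrite // za a_eqN1 scaleN1r opprK.
by rewrite Cpt => ->; rewrite linear0.
Qed.
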